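(* Let $G=\overline{B(K_m,K_n)}$ and let $S$ be a semi-transitive orientation of $G$. Then every vertex $x$ of $G$ is of type A, type B, or type C with respect to the clique not containing $x$.
   Context: $\overline{B(K_m,K_n)}$ denotes a graph whose vertex set is the disjoint union of two cliques $K_m$ and $K_n$ (of sizes $m,n$) with arbitrary edges between them. An orientation is semi-transitive if it is acyclic and shortcut-free, where a shortcut is an induced subgraph on vertices $v_0,v_1,\dots,v_t$ ($t\ge 3$) such that $v_0\to v_1\to\cdots\to v_t$ is a directed path, $v_0\to v_t$ is an edge, and some pair $v_i,v_j$ is non-adjacent. Any acyclic orientation induces a transitive orientation on each clique; so for a clique $K$ with $l$ vertices there is a directed Hamiltonian path $\vec P=p_1\to p_2\to\cdots\to p_l$ with $p_i\to p_j$ iff $i<j$ ($p_1$ the source, $p_l$ the sink). For a vertex $x$ in one clique, let $K'$ be the other clique with path $p_1\to\cdots\to p_l$. Then $x$ is of type A if its neighbours in $K'$ form a (possibly empty) set of consecutive vertices $p_a,p_{a+1},\dots,p_b$ of $\vec P$ and all edges between $x$ and these are directed away from $x$; type B if the same holds with all these edges directed towards $x$; type C if there are $1\le s<t\le l$ such that the neighbours of $x$ in $K'$ are exactly $p_1,\dots,p_s$ and $p_t,\dots,p_l$, with $p_i\to x$ for $i\le s$ and $x\to p_i$ for $i\ge t$ (the middle group $p_{s+1},\dots,p_{t-1}$ of non-neighbours may be empty). For type C, $\{p_1,\dots,p_s\}$ is the source-group and $\{p_t,\dots,p_l\}$ the sink-group of $x$. *)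

From mathcomp Require Import all_boot.
Set Implicit Arguments. Unset Strict Implicit. Unset Printing Implicit Defensive.

(* Vertex set of B(K_m,K_n)-bar: disjoint union of 'I_m (clique K_m, inl)
   and 'I_n (clique K_n, inr). *)
Definition vert (m n : nat) : finType := ('I_m + 'I_n)%type.

Definition adjB (m n : nat) (E : 'I_m -> 'I_n -> bool) : rel (vert m n) :=
  fun u v =>
    match u, v with
    | inl i, inl j => i != j
    | inr i, inr j => i != j
    | inl i, inr j => E i j
    | inr j, inl i => E i j
    end.

Definition inK_m (m n : nat) (v : vert m n) : bool :=
  if v is inl _ then true else false.

Definition other_clique (m n : nat) (x : vert m n) : pred (vert m n) :=
  fun y => inK_m y != inK_m x.

Definition is_orientation (T : finType) (adj : rel T) (O : rel T) : Prop :=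
  forall u v, adj u v = (O u v || O v u) /\ ~~ (O u v && O v u).

Definition acyclic (T : finType) (O : rel T) : Prop :=
  forall x p, path O x p -> last x p = x -> p = [::].

Definition shortcut_free (T : finType) (adj : rel T) (O : rel T) : Prop :=
  forall x p, uniq (x :: p) -> 3 <= size p -> path O x p -> O x (last x p) ->
    forall u v, u \in x :: p -> v \in x :: p -> u != v -> adj u v.

Definition semi_transitive (T : finType) (adj : rel T) (O : rel T) : Prop :=
  acyclic O /\ shortcut_free adj O.

(* P = p_1 -> ... -> p_l is the directed Hamiltonian path of the clique K
   (membership predicate) under O: p_i -> p_j iff i < j. (0-based indices;
   d is an arbitrary default element for nth.) *)
Definition ham_path (T : finType) (O : rel T) (K : pred T) (d : T) (P : seq T)
  : Prop :=
  [/\ uniq P, (forall y, (y \in P) = K y) &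
      forall i j, i < size P -> j < size P ->
        O (nth d P i) (nth d P j) = (i < j)].

(* Type A: neighbours of x in P are a block p_a..p_b of consecutive vertices
   (possibly empty, a > b), all edges directed away from x. *)
Definition typeA (T : finType) (adj O : rel T) (x : T) (P : seq T) : Prop :=
  exists a b : nat, forall i, i < size P ->
    adj x (nth x P i) = (a <= i <= b) /\ (a <= i <= b -> O x (nth x P i)).

Definition typeB (T : finType) (adj O : rel T) (x : T) (P : seq T) : Prop :=
  exists a b : nat, forall i, i < size P ->
    adj x (nth x P i) = (a <= i <= b) /\ (a <= i <= b -> O (nth x P i) x).

(* Type C: (1-based) 1 <= s < t <= l, neighbours exactly p_1..p_s and
   p_t..p_l, p_i -> x for i <= s, x -> p_i for i >= t.
   In 0-based indices: source group i < s, sink group i >= t', where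
   s = s_paper, t' = t_paper - 1, so 0 < s <= t' < l. *)
Definition typeC (T : finType) (adj O : rel T) (x : T) (P : seq T) : Prop :=
  exists s t : nat, [/\ 0 < s, s <= t, t < size P &
    forall i, i < size P ->
      [/\ adj x (nth x P i) = (i < s) || (t <= i),
          i < s -> O (nth x P i) x &
          t <= i -> O x (nth x P i)]].

(* Every neighbour p_i of x on the transitive path P is an in-neighbour
   (p_i -> x) or an out-neighbour (x -> p_i).  Acyclicity forces all
   in-neighbours to precede all out-neighbours, and each four-vertex shortcut
   x -> p_a -> p_j -> p_b, x -> p_b (and its three variants) forces the middle
   vertex p_j to be a neighbour of x.  Hence the out-neighbours form a block,
   the in-neighbours form a block, and when both kinds occur the in-neighbours
   are a prefix and the out-neighbours a suffix of P: types A, B and C. *)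
From mathcomp Require Import all_boot.
Set Implicit Arguments. Unset Strict Implicit.

Lemma bounded_exP (p : pred nat) (N : nat) :
  (forall i, p i -> i < N) -> (exists i, p i) \/ (forall i, ~~ p i).
Proof.
move=> p_lt; case: (boolP (has p (iota 0 N))) => [/hasP[i _ pi]|/hasPn no_p].
  by left; exists i.
right=> i; apply/negP=> pi.
have: i \in iota 0 N by rewrite mem_iota add0n p_lt.
by move/no_p; rewrite pi.
Qed.

Lemma convex_nat_interval (p : pred nat) (N : nat) :
  (forall i, p i -> i < N) ->
  (forall a b j, p a -> p b -> a < j < b -> p j) ->
  exists a b, forall i, p i = (a <= i <= b).
Proof.
move=> p_lt p_convex; case: (bounded_exP p_lt) => [p_ex|no_p]; last first.
  by exists 1, 0 => i; rewrite (negbTE (no_p i)); case: i.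
have p_le i : p i -> i <= N by move/p_lt/ltnW.
case: (ex_minnP p_ex) => a pa a_min; case: (ex_maxnP p_ex p_le) => b pb b_max.
exists a, b => i; apply/idP/idP => [pi|/andP[]]; first by rewrite a_min ?b_max.
rewrite leq_eqVlt => /predU1P[<- //|ai].
rewrite leq_eqVlt => /predU1P[-> //|ib].
by apply: (p_convex a b); rewrite ?ai.
Qed.

Section SemiTransitiveOrientation.

Variables (T : finType) (adj O : rel T).
Hypothesis orientO : is_orientation adj O.
Hypothesis acyclicO : acyclic O.
Hypothesis shortcut_freeO : shortcut_free adj O.

Lemma orient_irrefl u : O u u = false.
Proof. by have [_] := orientO u u; case: (O u u). Qed.

Lemma orient_asym u v : O u v -> O v u = false.
Proof. by move=> uv; have [_] := orientO u v; rewrite uv; case: (O v u). Qed.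

Lemma adj_orientE u v : adj u v = O u v || O v u.
Proof. by have [] := orientO u v. Qed.

Lemma adj_sym u v : adj u v = adj v u.
Proof. by rewrite !adj_orientE orbC. Qed.

Lemma no_3cycle a b c : O a b -> O b c -> O c a -> False.
Proof.
move=> ab bc ca; have := @acyclicO a [:: b; c; a].
by rewrite /= ab bc ca => /(_ erefl erefl).
Qed.

Lemma shortcut_free4 a b c d :
  O a b -> O b c -> O c d -> O a d -> adj a c /\ adj b d.
Proof.
move=> ab bc cd ad.
have neq u v : O u v -> u != v.
  by move=> uv; apply: contraTneq uv => ->; rewrite orient_irrefl.
have neq2 u v w : O u v -> O v w -> u != w.
  by move=> uv vw; apply: contraTneq vw => <-; rewrite (orient_asym uv).
have abcd_uniq : uniq [:: a; b; c; d].
  rewrite /= !inE !negb_or (neq _ _ ab) (neq2 _ _ _ ab bc) (neq _ _ ad).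
  by rewrite (neq _ _ bc) (neq2 _ _ _ bc cd) (neq _ _ cd).
have abcd_path : path O a [:: b; c; d] by rewrite /= ab bc cd.
have adj_abcd := shortcut_freeO abcd_uniq erefl abcd_path ad.
by split; apply: adj_abcd;
  rewrite ?inE ?eqxx ?orbT ?(neq2 _ _ _ ab bc) ?(neq2 _ _ _ bc cd).
Qed.

Variables (x : T) (P : seq T).
Hypothesis P_transitive : forall i j, i < size P -> j < size P ->
  O (nth x P i) (nth x P j) = (i < j).

Definition in_nbr i := (i < size P) && O (nth x P i) x.
Definition out_nbr i := (i < size P) && O x (nth x P i).

Lemma in_nbr_lt i : in_nbr i -> i < size P. Proof. by case/andP. Qed.
Lemma out_nbr_lt i : out_nbr i -> i < size P. Proof. by case/andP. Qed.

Lemma adj_nthE i : i < size P -> adj x (nth x P i) = in_nbr i || out_nbr i.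
Proof. by move=> iP; rewrite adj_orientE /in_nbr /out_nbr iP orbC. Qed.

Lemma in_before_out i k : in_nbr i -> out_nbr k -> i < k.
Proof.
move=> /andP[iP ix] /andP[kP xk]; case: (ltngtP i k) => // [ki|ik].
  by case: (no_3cycle xk _ ix); rewrite P_transitive.
by move: xk; rewrite -ik (orient_asym ix).
Qed.

Lemma in_nbr_of_adj i j :
  in_nbr i -> j < i -> adj x (nth x P j) -> in_nbr j.
Proof.
move=> in_i ji; rewrite adj_nthE ?(ltn_trans ji (in_nbr_lt in_i)) //.
by case/orP=> // /(in_before_out in_i); rewrite ltnNge (ltnW ji).
Qed.

Lemma out_nbr_of_adj k j :
  out_nbr k -> k < j -> j < size P -> adj x (nth x P j) -> out_nbr j.
Proof.
move=> out_k kj jP; rewrite adj_nthE //.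
by case/orP=> // /in_before_out/(_ out_k); rewrite ltnNge (ltnW kj).
Qed.

Lemma out_nbr_convex a b j : out_nbr a -> out_nbr b -> a < j < b -> out_nbr j.
Proof.
move=> out_a out_b /andP[aj jb].
move: (out_a) (out_b) => /andP[aP xa] /andP[bP xb].
have jP : j < size P by apply: ltn_trans bP.
apply: (out_nbr_of_adj out_a aj jP).
by case: (@shortcut_free4 x (nth x P a) (nth x P j) (nth x P b));
  rewrite ?P_transitive.
Qed.

Lemma in_nbr_convex a b j : in_nbr a -> in_nbr b -> a < j < b -> in_nbr j.
Proof.
move=> in_a in_b /andP[aj jb].
move: (in_a) (in_b) => /andP[aP ax] /andP[bP bx].
apply: (in_nbr_of_adj in_b jb); rewrite adj_sym.
by case: (@shortcut_free4 (nth x P a) (nth x P j) (nth x P b) x);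
  rewrite ?P_transitive ?(ltn_trans jb bP).
Qed.

Lemma in_nbr_prefix i k j : in_nbr i -> out_nbr k -> j < i -> in_nbr j.
Proof.
move=> in_i out_k ji; have ik := in_before_out in_i out_k.
move: (in_i) (out_k) => /andP[iP ix] /andP[kP xk].
apply: (in_nbr_of_adj in_i ji); rewrite adj_sym.
by case: (@shortcut_free4 (nth x P j) (nth x P i) x (nth x P k));
  rewrite ?P_transitive ?(ltn_trans ji ik) ?(ltn_trans ji iP).
Qed.

Lemma out_nbr_suffix i k j :
  in_nbr i -> out_nbr k -> k < j -> j < size P -> out_nbr j.
Proof.
move=> in_i out_k kj jP; have ik := in_before_out in_i out_k.
move: (in_i) (out_k) => /andP[iP ix] /andP[kP xk].
apply: (out_nbr_of_adj out_k kj jP).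
by case: (@shortcut_free4 (nth x P i) x (nth x P k) (nth x P j));
  rewrite ?P_transitive ?(ltn_trans ik kj).
Qed.

Lemma typeA_of_no_in_nbr : (forall i, ~~ in_nbr i) -> typeA adj O x P.
Proof.
move=> no_in.
have [a [b out_ab]] := convex_nat_interval out_nbr_lt out_nbr_convex.
exists a, b => i iP; rewrite adj_nthE // (negbTE (no_in i)) -out_ab.
by split=> // /andP[].
Qed.

Lemma typeB_of_no_out_nbr : (forall i, ~~ out_nbr i) -> typeB adj O x P.
Proof.
move=> no_out.
have [a [b in_ab]] := convex_nat_interval in_nbr_lt in_nbr_convex.
exists a, b => i iP; rewrite adj_nthE // (negbTE (no_out i)) orbF -in_ab.
by split=> // /andP[].
Qed.

Lemma typeC_of_in_out_nbr i0 k0 : in_nbr i0 -> out_nbr k0 -> typeC adj O x P.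
Proof.
move=> in_i0 out_k0.
have in_le i : in_nbr i -> i <= size P by move/in_nbr_lt/ltnW.
case: (ex_maxnP (ex_intro _ i0 in_i0) in_le) => s in_s s_max.
case: (ex_minnP (ex_intro _ k0 out_k0)) => t out_t t_min.
have st := in_before_out in_s out_t.
have in_nbrE i : i < size P -> in_nbr i = (i < s.+1).
  move=> iP; apply/idP/idP => [/s_max //|]; rewrite ltnS leq_eqVlt.
  by case/predU1P => [-> //|]; apply: in_nbr_prefix in_s out_t.
have out_nbrE i : i < size P -> out_nbr i = (t <= i).
  move=> iP; apply/idP/idP => [/t_min //|]; rewrite leq_eqVlt.
  by case/predU1P => [<- //|ti]; apply: out_nbr_suffix in_s out_t ti iP.
exists s.+1, t; split=> //; first exact: out_nbr_lt.
move=> i iP; rewrite adj_nthE // -in_nbrE // -out_nbrE //.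
by split=> // /andP[].
Qed.

End SemiTransitiveOrientation.

Theorem mainTheorem10 (m n : nat) (E : 'I_m -> 'I_n -> bool)
  (O : rel (vert m n)) :
  is_orientation (adjB E) O ->
  semi_transitive (adjB E) O ->
  forall (x : vert m n) (P : seq (vert m n)),
    ham_path O (other_clique x) x P ->
    typeA (adjB E) O x P \/ typeB (adjB E) O x P \/ typeC (adjB E) O x P.
Proof.
move=> orientO [acyclicO shortcut_freeO] x P [_ _ P_transitive].
case: (bounded_exP (@in_nbr_lt _ O x P)) => [[i0 in_i0]|no_in].
  case: (bounded_exP (@out_nbr_lt _ O x P)) => [[k0 out_k0]|no_out].
    by right; right; apply: typeC_of_in_out_nbr in_i0 out_k0.
  by right; left; apply: typeB_of_no_out_nbr.
by left; apply: typeA_of_no_in_nbr.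
Qed.
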